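(* Let $d,N\in\mathbb{N}$, $h>0$, $\rho\in\mathbb{R}^{d\times d}$ diagonal, $L_d:\mathbb{R}^d\times\mathbb{R}^d\to\mathbb{R}$ differentiable, and $\alpha=1/2$. Define $f^-_{L_d},f^+_{L_d}:\mathbb{R}^d\times\mathbb{R}^d\to\mathbb{R}^d$ by $f^-_{L_d}(u,w)=0$ and $f^+_{L_d}(u,w)=-\rho(w-u)$. Then for any $\{x_k\}_{k=0}^N\subset\mathbb{R}^d$ and $k\in\{1,\dots,N-1\}$, the equation $$D_1L_d(x_k,x_{k+1})+D_2L_d(x_{k-1},x_k)-h\,\rho\,\Delta^{1/2}_-\Delta^{1/2}_-x_k=0$$ holds if and only if the forced discrete Euler–Lagrange equation $$D_1L_d(x_k,x_{k+1})+D_2L_d(x_{k-1},x_k)+f^-_{L_d}(x_k,x_{k+1})+f^+_{L_d}(x_{k-1},x_k)=0$$ holds.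
   Context: $D_1,D_2$ denote partial derivatives of $L_d$ with respect to its first and second arguments. For a sequence $\{z_k\}_{k=0}^N$, $\Delta^\alpha_-z_k:=h^{-\alpha}\sum_{n=0}^{k}\alpha_n z_{k-n}$, where $\alpha_0:=1$ and $\alpha_n:=\frac{-\alpha(1-\alpha)(2-\alpha)\cdots(n-1-\alpha)}{n!}$ for $n\ge1$; $\Delta^\alpha_-\Delta^\alpha_-x_k$ denotes $\Delta^\alpha_-$ applied to the sequence $\{\Delta^\alpha_-x_j\}_{j=0}^N$ at index $k$ (componentwise on $\mathbb{R}^d$). *)

From HB Require Import structures.
From mathcomp Require Import all_boot all_order all_algebra.
From mathcomp Require Import all_classical all_reals all_analysis.
Set Implicit Arguments. Unset Strict Implicit. Unset Printing Implicit Defensive.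
Import Order.TTheory GRing.Theory Num.Theory.
Import numFieldNormedType.Exports.
Local Open Scope ring_scope.

Section Defs.
Variable R : realType.
Variable d : nat.

Definition D1 (L : 'cV[R]_d * 'cV[R]_d -> R) (u w : 'cV[R]_d) : 'cV[R]_d :=
  \col_j (derive L (u, w) (delta_mx j 0, 0)).
Definition D2 (L : 'cV[R]_d * 'cV[R]_d -> R) (u w : 'cV[R]_d) : 'cV[R]_d :=
  \col_j (derive L (u, w) (0, delta_mx j 0)).

Definition alpha_coef (a : R) (n : nat) : R :=
  if n == 0%N then 1
  else - a * (\prod_(1 <= i < n) (i%:R - a)) / (n`!)%:R.

Definition frac_diff (a h : R) (z : nat -> 'cV[R]_d) (k : nat) : 'cV[R]_d :=
  h `^ (- a) *: \sum_(0 <= n < k.+1) alpha_coef a n *: z (k - n)%N.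

Definition f_minus (rho : 'M[R]_d) (u w : 'cV[R]_d) : 'cV[R]_d := 0.
Definition f_plus (rho : 'M[R]_d) (u w : 'cV[R]_d) : 'cV[R]_d :=
  - (rho *m (w - u)).
End Defs.

From HB Require Import structures.
From mathcomp Require Import all_boot all_order all_algebra.
From mathcomp Require Import all_classical all_reals all_analysis.
From mathcomp Require Import ring.
Import Order.TTheory GRing.Theory Num.Theory.
Import numFieldNormedType.Exports.
Local Open Scope ring_scope.

(* The coefficients alpha_n are those of the power series (1 - z)^a; they are
   characterised by alpha_0 = 1 and the recurrence (n+1) alpha_(n+1) =
   (n - a) alpha_n, and the Cauchy product of the sequences for a and b
   satisfies the recurrence for a + b.  Hence Delta^a Delta^b = Delta^(a+b)
   (the powers h^(-a) h^(-b) combine as well), and Delta^1 is the backward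
   difference quotient since (1 - z)^1 = 1 - z.  So h rho Delta^(1/2)
   Delta^(1/2) x_k = rho (x_k - x_(k-1)) = - f^+(x_(k-1), x_k), and as f^- = 0
   the two equations have literally the same left-hand side. *)

Section AlphaCoef.
Variable R : realType.
Implicit Types (a b c : R) (n : nat).

Lemma alpha_coefS a n : alpha_coef a n.+1 * n.+1%:R = alpha_coef a n * (n%:R - a).
Proof.
rewrite /alpha_coef /=; case: n => [|n] /=.
  by rewrite big_geq // divr1; ring.
rewrite big_nat_recr //= factS natrM.
have fact_neq0 : (n.+1`!)%:R != 0 :> R by rewrite pnatr_eq0 -lt0n fact_gt0.
by field; rewrite fact_neq0 -(natrD R 2) pnatr_eq0.
Qed.

Lemma eq_alpha_coef_rec (u : nat -> R) c :
  u 0%N = 1 -> (forall n, u n.+1 * n.+1%:R = u n * (n%:R - c)) ->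
  forall n, u n = alpha_coef c n.
Proof.
move=> u0 uS; elim=> [|n IH]; first by rewrite u0.
apply: (mulIf (_ : n.+1%:R != 0)); first by rewrite pnatr_eq0.
by rewrite uS alpha_coefS IH.
Qed.

Lemma alpha_coef_conv a b n :
  \sum_(0 <= i < n.+1) alpha_coef a i * alpha_coef b (n - i) = alpha_coef (a + b) n.
Proof.
pose conv n := \sum_(0 <= i < n.+1) alpha_coef a i * alpha_coef b (n - i).
apply: (@eq_alpha_coef_rec conv) => [|{}n].
  by rewrite /conv big_nat1 /alpha_coef /= mulr1.
pose t i := alpha_coef a i * alpha_coef b (n - i).
have left_part : \sum_(0 <= i < n.+2) alpha_coef a i * alpha_coef b (n.+1 - i) * i%:R
    = \sum_(0 <= i < n.+1) t i * (i%:R - a).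
  rewrite big_nat_recl // mulr0 add0r; apply: eq_bigr => i _.
  by rewrite subSS /t -mulrA mulrCA alpha_coefS; ring.
have right_part :
    \sum_(0 <= i < n.+2) alpha_coef a i * alpha_coef b (n.+1 - i) * (n.+1 - i)%N%:R
    = \sum_(0 <= i < n.+1) t i * ((n - i)%N%:R - b).
  rewrite big_nat_recr //= subnn mulr0 addr0.
  by apply: eq_big_nat => i /andP[_ lt_in]; rewrite subSn // -mulrA alpha_coefS /t; ring.
rewrite /conv mulr_suml mulr_suml.
transitivity (\sum_(0 <= i < n.+1) t i * (i%:R - a)
              + \sum_(0 <= i < n.+1) t i * ((n - i)%N%:R - b)).
  rewrite -left_part -right_part -big_split /=.
  by apply: eq_big_nat => i /andP[_ le_in]; rewrite -mulrDr -natrD subnKC.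
rewrite -big_split /=; apply: eq_big_nat => i /andP[_ le_in].
by rewrite /t natrB //; ring.
Qed.

Lemma alpha_coef1 n : alpha_coef (1 : R) n = [:: 1; -1]`_n.
Proof.
case: n => [|[|n]] /=; rewrite /alpha_coef //=.
  by rewrite big_geq // divr1 mulr1.
by rewrite big_ltn // subrr mul0r mulr0 mul0r nth_nil.
Qed.

End AlphaCoef.

Lemma sum_nat_triangle (V : nmodType) (G : nat -> nat -> V) k :
  \sum_(0 <= n < k.+1) \sum_(0 <= m < (k - n)%N.+1) G n m
  = \sum_(0 <= j < k.+1) \sum_(0 <= n < j.+1) G n (j - n)%N.
Proof.
transitivity (\sum_(0 <= n < k.+1) \sum_(0 <= j < k.+1 | (n <= j)%N) G n (j - n)%N).
  apply: eq_big_nat => n /andP[_ le_nk].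
  transitivity (\sum_(n <= j < k.+1) G n (j - n)%N); last exact: big_nat_widenl.
  have := big_addn 0 k.+1 n predT (fun j => G n (j - n)%N); rewrite add0n => ->.
  by rewrite subSn //; apply: eq_bigr => m _; rewrite addnK.
rewrite (exchange_big_dep_nat predT) //=; apply: eq_big_nat => j /andP[_ le_jk].
by rewrite (big_nat_widen 0 j.+1 k.+1).
Qed.

Section FracDiff.
Variables (R : realType) (d : nat).
Implicit Types (a b h : R) (z : nat -> 'cV[R]_d).

Lemma frac_diffD a b h z k : 0 < h ->
  frac_diff a h (frac_diff b h z) k = frac_diff (a + b) h z k.
Proof.
move=> h_gt0; rewrite /frac_diff opprD powRD ?(gt_eqF h_gt0) ?implybT // -scalerA.
congr (_ *: _).
under eq_bigr => n _ do rewrite scalerA mulrC -scalerA.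
rewrite -scaler_sumr; congr (_ *: _).
under eq_bigr => n _ do rewrite scaler_sumr.
under eq_bigr => n _ do under eq_bigr => m _ do rewrite scalerA.
rewrite sum_nat_triangle; apply: eq_bigr => j _.
rewrite -alpha_coef_conv scaler_suml; apply: eq_big_nat => n /andP[_ le_nj].
by rewrite -subnDA subnKC.
Qed.

Lemma frac_diff1 h z k : 0 <= h -> frac_diff 1 h z k.+1 = h^-1 *: (z k.+1 - z k).
Proof.
move=> h_ge0; rewrite /frac_diff powR_inv1 //; congr (_ *: _).
rewrite big_nat_recl // big_nat_recl // big1 => [|n _]; last first.
  by rewrite alpha_coef1 /= nth_nil scale0r.
by rewrite (alpha_coef1 R 0) (alpha_coef1 R 1) /= scale1r scaleN1r addr0 subn0 subSS subn0.
Qed.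

End FracDiff.

Theorem corollary4p12 (R : realType) (d N : nat) (h : R) (hpos : 0 < h)
  (rho : 'M[R]_d) (hdiag : is_diag_mx rho)
  (L : 'cV[R]_d * 'cV[R]_d -> R) (hL : forall p, differentiable L p)
  (x : nat -> 'cV[R]_d) (k : nat) (hk1 : (1 <= k)%N) (hk2 : (k < N)%N) :
  D1 L (x k) (x k.+1) + D2 L (x k.-1) (x k)
    - h *: (rho *m frac_diff (1 / 2) h (frac_diff (1 / 2) h x) k) = 0
  <->
  D1 L (x k) (x k.+1) + D2 L (x k.-1) (x k)
    + f_minus rho (x k) (x k.+1) + f_plus rho (x k.-1) (x k) = 0.
Proof.
have half_half : 1 / 2 + 1 / 2 = 1 :> R by field.
case: k hk1 hk2 => [//|k] _ _ /=.
rewrite frac_diffD // half_half frac_diff1 ?ltW // -scalemxAr scalerA.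
by rewrite mulfV ?gt_eqF // scale1r /f_minus /f_plus addr0.
Qed.
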